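(* Let $S \in \{0,1\}^{\omega}$. 1. If $\rho_{\mathrm{PD}}(S) = 1$, then $S$ is not PD-deep. 2. If $R_{\mathrm{UPD}}(S) = 0$, then $S$ is not PD-deep.
   Context: For $S\in\{0,1\}^\omega$, $S\upharpoonright n$ denotes the prefix of length $n$ of $S$. A pushdown compressor (PDC) is a tuple $C=(Q,\Gamma,\delta,\nu,q_0,z_0,c)$ where $Q$ is a finite nonempty set of states, $\Gamma=\{0,1,z_0\}$ is the stack alphabet with $z_0$ the bottom-of-stack symbol, $\delta: Q\times(\{0,1\}\cup\{\lambda\})\times\Gamma\to Q\times\Gamma^*$ is a partial transition function, $\nu: Q\times(\{0,1\}\cup\{\lambda\})\times\Gamma\to\{0,1\}^*$ is the output function, $q_0$ is the start state, and $c\in\mathbb{N}$ bounds the number of consecutive $\lambda$-transitions (transitions that read no input bit; $\lambda$-transitions pop the top stack symbol and output nothing). On each transition the top stack symbol is replaced by the string given by $\delta$; $z_0$ is never removed from the bottom. Determinism: for each state $q$ and top symbol $a$, either $\delta(q,\lambda,a)$ is undefined or $\delta(q,b,a)$ is undefined for both $b\in\{0,1\}$. After each input bit, all available $\lambda$-transitions are performed. $C(w)$ denotes the concatenated output on input $w$ from $q_0$ with stack $z_0$, and $\delta_Q(w)$ the resulting state. $C$ is information lossless (an ILPDC) if $w\mapsto (C(w),\delta_Q(w))$ is injective. A unary-stack PDC (UPDC) is defined identically but with stack alphabet $\Gamma=\{0,z_0\}$; an information lossless one is an ILUPDC. $\rho_{\mathrm{PD}}(S)=\inf_{C\in\mathrm{ILPDC}}\liminf_{n\to\infty}|C(S\upharpoonright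 n)|/n$ and $R_{\mathrm{UPD}}(S)=\inf_{C\in\mathrm{ILUPDC}}\limsup_{n\to\infty}|C(S\upharpoonright n)|/n$. $S$ is PD-deep if there is $\alpha>0$ such that for every ILUPDC $C$ there is an ILPDC $C'$ with $|C(S\upharpoonright n)|-|C'(S\upharpoonright n)|\ge \alpha n$ for all but finitely many $n$. *)

From HB Require Import structures.
From mathcomp Require Import all_boot all_order all_algebra.
From mathcomp Require Import all_classical all_reals all_analysis.
Set Implicit Arguments. Unset Strict Implicit. Unset Printing Implicit Defensive.
Import Order.TTheory GRing.Theory Num.Theory.
Local Open Scope classical_set_scope.
Local Open Scope ring_scope.

(* The stack alphabet is [option G]: [None] is the bottom symbol z0,   *)
(* [Some a] an ordinary symbol.  PDC: G = bool (Gamma = {0,1,z0}),     *)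
(* UPDC: G = unit (Gamma = {0,z0}).  The input letter is [option bool]:*)
(* [None] is lambda.  The stack is a list with its top at the head.    *)

Record pdc (G : eqType) := Pdc {
  pd_Q     : finType;
  pd_delta : pd_Q -> option bool -> option G -> option (pd_Q * seq (option G));
  pd_nu    : pd_Q -> option bool -> option G -> seq bool;
  pd_q0    : pd_Q;
  pd_c     : nat
}.
Arguments pd_Q {G} p.
Arguments pd_delta {G} p _ _ _.
Arguments pd_nu {G} p _ _ _.
Arguments pd_q0 {G} p.
Arguments pd_c {G} p.

Section Semantics.
Variables (G : eqType) (C : pdc G).

Definition config := (pd_Q C * seq (option G))%type.

Definition step (x : option bool) (cf : config) : option (config * seq bool) :=
  match cf.2 with
  | [::] => None
  | a :: s =>
      match pd_delta C cf.1 x a with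
      | Some (q', v) => Some ((q', v ++ s), pd_nu C cf.1 x a)
      | None => None
      end
  end.

Definition lam_step (cf : config) : option config :=
  omap fst (step None cf).

Fixpoint lam_close (fuel : nat) (cf : config) : config * seq bool :=
  match fuel with
  | 0 => (cf, [::])
  | k.+1 =>
      match step None cf with
      | Some (cf', o) => let r := lam_close k cf' in (r.1, o ++ r.2)
      | None => (cf, [::])
      end
  end.

Definition read_bit (b : bool) (cf : config) : option (config * seq bool) :=
  match step (Some b) cf with
  | Some (cf', o) => let r := lam_close (pd_c C) cf' in Some (r.1, o ++ r.2)
  | None => None
  end.

Fixpoint run_from (w : seq bool) (cf : config) : option (config * seq bool) :=
  match w with
  | [::] => Some (cf, [::])
  | b :: w' =>
      match read_bit b cf with
      | Some (cf', o) =>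
          match run_from w' cf' with
          | Some (cf'', o') => Some (cf'', o ++ o')
          | None => None
          end
      | None => None
      end
  end.

Definition init_config : config := (pd_q0 C, [:: None]).

Definition run (w : seq bool) := run_from w init_config.

(* C(w) and delta_Q(w); meaningful when the run is defined *)
Definition pd_out (w : seq bool) : seq bool :=
  if run w is Some (_, o) then o else [::].

Definition pd_state (w : seq bool) : pd_Q C :=
  if run w is Some (cf, _) then cf.1 else pd_q0 C.

Definition pdc_wf : Prop :=
  (forall q a, pd_delta C q None a = None \/
     (pd_delta C q (Some false) a = None /\ pd_delta C q (Some true) a = None))
  /\ (forall q a, pd_nu C q None a = [::])
  /\ (forall q a q' v, pd_delta C q None (Some a) = Some (q', v) -> v = [::])
  /\ (forall q q' v, pd_delta C q None None = Some (q', v) -> v = [:: None])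
  (* z0 is never removed from the bottom and only appears there *)
  /\ (forall q x q' v, pd_delta C q x None = Some (q', v) ->
        exists2 v', v = rcons v' None & None \notin v')
  /\ (forall q x a q' v, pd_delta C q x (Some a) = Some (q', v) -> None \notin v)
  (* c bounds the number of consecutive lambda-transitions *)
  /\ (forall cf, iter (pd_c C).+1 (fun o => obind lam_step o) (Some cf) = None).

Definition info_lossless : Prop :=
  (forall w, run w <> None) /\
  (forall w1 w2, pd_out w1 = pd_out w2 -> pd_state w1 = pd_state w2 -> w1 = w2).

End Semantics.

Definition ILPDC (C : pdc bool) : Prop := pdc_wf C /\ info_lossless C.
Definition ILUPDC (C : pdc unit) : Prop := pdc_wf C /\ info_lossless C.

Definition prefix (S : nat -> bool) (n : nat) : seq bool := mkseq S n.

Section Rates.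
Variable R : realType.
Local Open Scope ereal_scope.

Definition ratio (G : eqType) (C : pdc G) (S : nat -> bool) : (\bar R)^nat :=
  fun n => ((size (pd_out C (prefix S n)))%:R / n%:R)%:E.

Definition rho_PD (S : nat -> bool) : \bar R :=
  ereal_inf [set x | exists2 C, ILPDC C & x = limn_einf (ratio C S)].

Definition R_UPD (S : nat -> bool) : \bar R :=
  ereal_inf [set x | exists2 C, ILUPDC C & x = limn_esup (ratio C S)].
End Rates.

Definition PD_deep (R : realType) (S : nat -> bool) : Prop :=
  exists2 alpha : R, 0 < alpha &
    forall C : pdc unit, ILUPDC C ->
      exists2 C' : pdc bool, ILPDC C' &
        exists N : nat, forall n : nat, (N <= n)%N ->
          alpha * n%:R <=
            (size (pd_out C (prefix S n)))%:R - (size (pd_out C' (prefix S n)))%:R.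

From Pilot Require Import Defs.
From HB Require Import structures.
From mathcomp Require Import all_boot all_order all_algebra.
From mathcomp Require Import all_classical all_reals all_analysis.
From mathcomp Require Import lra.
Set Implicit Arguments. Unset Strict Implicit. Unset Printing Implicit Defensive.
Import Order.TTheory GRing.Theory Num.Theory.
Local Open Scope classical_set_scope.
Local Open Scope ring_scope.

(* If S is PD-deep with constant alpha, compare against the identity ILUPDC,
   whose output on S|n has length n: some ILPDC then compresses S|n to at most
   (1 - alpha) n bits for all large n, so rho_PD(S) <= 1 - alpha < 1.
   If R_UPD(S) = 0, some ILUPDC C eventually has |C(S|n)| < alpha n, and then no
   compressor can beat C by alpha n bits. *)

Section limn_esup_near.
Context {R : realType}.
Implicit Types (u : (\bar R)^nat) (l : \bar R).
Local Open Scope ereal_scope.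

Lemma limn_esup_le_near u l :
  (\forall n \near \oo, u n <= l) -> limn_esup u <= l.
Proof.
move=> ul; apply: ge_ereal_inf; exists (ereal_sup (u @` [set n | u n <= l])).
  by exists [set n | u n <= l].
by apply: ge_ereal_sup => _ [n ? <-].
Qed.

Lemma limn_esup_lt_near u l :
  limn_esup u < l -> \forall n \near \oo, u n < l.
Proof.
move=> /ereal_inf_lt[_ [V Voo <-] Vl]; apply: filterS Voo => n Vn.
by apply: le_lt_trans Vl; apply: ereal_sup_ubound; exists n.
Qed.
End limn_esup_near.

Definition id_updc : pdc unit :=
  @Pdc unit unit
    (fun _ x a => if x is Some _ then Some (tt, [:: a]) else None)
    (fun _ x _ => if x is Some b then [:: b] else [::])
    tt 0.

Lemma run_id_updc w : run id_updc w = Some ((tt, [:: None]), w).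
Proof.
rewrite /run /init_config /=.
by elim: w => [|b w IHw] //=; rewrite /read_bit /step /= IHw.
Qed.

Lemma pd_out_id_updc w : pd_out id_updc w = w.
Proof. by rewrite /pd_out run_id_updc. Qed.

Lemma ILUPDC_id_updc : ILUPDC id_updc.
Proof.
split; last by split=> [w|w1 w2]; rewrite ?run_id_updc ?pd_out_id_updc.
split; first by move=> q a; left.
do 3!split=> //.
split; first by move=> q [x|] q' v //= [_ <-]; exists [::].
by split=> [q [x|] a q' v //= [_ <-]|[q [|a s]]].
Qed.

Lemma size_prefix (S : nat -> bool) n : size (Defs.prefix S n) = n.
Proof. exact: size_mkseq. Qed.

Section rates.
Variables (R : realType) (S : nat -> bool).
Local Open Scope ereal_scope.

Lemma ratio_le (G : eqType) (C : pdc G) (beta : R) n : (0 < n)%N ->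
  (Defs.ratio R C S n <= beta%:E) =
  ((size (pd_out C (Defs.prefix S n)))%:R <= beta * n%:R)%R.
Proof. by move=> n0; rewrite /Defs.ratio lee_fin ler_pdivrMr ?ltr0n. Qed.

Lemma ratio_lt (G : eqType) (C : pdc G) (beta : R) n : (0 < n)%N ->
  (Defs.ratio R C S n < beta%:E) =
  ((size (pd_out C (Defs.prefix S n)))%:R < beta * n%:R)%R.
Proof. by move=> n0; rewrite /Defs.ratio lte_fin ltr_pdivrMr ?ltr0n. Qed.

Lemma rho_PD_le (C : pdc bool) (beta : R) : ILPDC C ->
  (\forall n \near \oo, (size (pd_out C (Defs.prefix S n)))%:R <= beta * n%:R)%R ->
  rho_PD R S <= beta%:E.
Proof.
move=> CIL small; apply: (@le_trans _ _ (limn_einf (Defs.ratio R C S))).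
  by apply: ereal_inf_lbound; exists C.
apply: le_trans (limn_einf_sup _) _; apply: limn_esup_le_near.
by near=> n; rewrite ratio_le //; near: n.
Unshelve. all: by end_near. Qed.

Lemma R_UPD_lt (beta : R) : R_UPD R S < beta%:E ->
  exists2 C : pdc unit, ILUPDC C &
    (\forall n \near \oo, (size (pd_out C (Defs.prefix S n)))%:R < beta * n%:R)%R.
Proof.
move=> /ereal_inf_lt[_ [C CIL ->]] /limn_esup_lt_near small; exists C => //.
by near=> n; rewrite -ratio_lt //; near: n.
Unshelve. all: by end_near. Qed.
End rates.

Theorem mainTheorem1 (R : realType) (S : nat -> bool) :
  (rho_PD R S = 1%:E -> ~ PD_deep R S) /\
  (R_UPD R S = 0%:E -> ~ PD_deep R S).
Proof.
split=> [rho1 | RUPD0] [a a0 deep].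
- have [C' C'IL [N gap]] := deep _ ILUPDC_id_updc.
  have : (rho_PD R S <= (1 - a)%R%:E)%E.
    apply: (rho_PD_le C'IL); exists N => // n /gap.
    by rewrite pd_out_id_updc size_prefix; lra.
  by rewrite rho1 lee_fin; lra.
- have RUPD_lt_a : (R_UPD R S < a%:E)%E by rewrite RUPD0 lte_fin.
  have [C CIL small] := R_UPD_lt RUPD_lt_a.
  have [C' _ [N gap]] := deep C CIL.
  have [n [Cn /gap]] := filter_ex (filterI small (nbhs_infty_ge N)).
  have := ler0n R (size (pd_out C' (Defs.prefix S n))); lra.
Qed.
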